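(* Let $\varphi\in\mathrm{THT}_1(\mathsf X,\mathsf G)$ and let $M$ be an equilibrium model of $\varphi$. Then every witness extraction of $M$ for $\varphi$ is also an equilibrium model of $\varphi$.
   Context: Fix a finite set $P$ of atomic propositions. THT formulas over $P$: $\varphi ::= p \mid \bot \mid \varphi\vee\varphi \mid \varphi\wedge\varphi \mid \varphi\rightarrow\varphi \mid \mathsf{X}\varphi \mid \varphi\,\mathsf{U}\,\varphi \mid \varphi\,\mathsf{R}\,\varphi$, with $\neg\varphi:=\varphi\rightarrow\bot$, $\top:=\neg\bot$, $\mathsf F\varphi:=\top\mathsf U\varphi$, $\mathsf G\varphi:=\bot\mathsf R\varphi$. A THT interpretation is a pair $M=(H,T)$ of infinite words over $2^P$ with $H(i)\subseteq T(i)$ for all $i$. Write $M(i)=(H(i),T(i))$; $M$ is total if $H=T$. Satisfaction $M,i\models\varphi$ is defined by: - $M,i\not\models\bot$; - $M,i\models p$ iff $p\in H(i)$; - $\vee$ and $\wedge$ are interpreted as usual; - $M,i\models\varphi\rightarrow\psi$ iff for both $H'\in\{H,T\}$, either $(H',T),i\not\models\varphi$ or $(H',T),i\models\psi$; - $M,i\models\mathsf X\varphi$ iff $M,i+1\models\varphi$; - $\mathsf U$ and $\mathsf R$ have the usual LTL clauses evaluated in $M$ (so $M,i\models\mathsf G\varphi$ iff $M,j\models\varphi$ for all $j\ge i$). $M\models\varphi$ means $M,0\models\varphi$. An equilibrium model of $\varphi$ is a total $(T,T)\models\varphi$ with $(H,T)\not\models\varphi$ whenever $H(i)\subseteq T(i)$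 for all $i$ and $H\ne T$. $\mathrm{THT}_1(\mathsf X,\mathsf G)$ is the set of formulas whose only temporal modalities are $\mathsf X$ and $\mathsf G$, with no temporal modality nested inside another. Witness pattern. A witness pattern of $M=(H,T)$ for $\varphi$ is a strictly increasing sequence $n_0<n_1<\cdots$ such that, for some $k\ge0$, $M(n_i)=M(n_{k+1})$ for all $i\ge k+1$, and $W=\{n_0,\dots,n_k\}$ is minimal with respect to the following conditions: - $0\in W$, and $1\in W$ if $\varphi$ has a subformula $\mathsf X\psi$; - if $M$ is not total, some $i$ with $H(i)\subsetneq T(i)$ is in $W$; - for each subformula $\varphi_1\mathsf U\varphi_2$: if $M\models\varphi_1\mathsf U\varphi_2$, the least $i$ with $M,i\models\varphi_2$ is in $W$; if $M\not\models\varphi_1\mathsf U\varphi_2$ and $M\models\mathsf F\varphi_2$, the least $i$ with $M,i\not\models\varphi_1$ is in $W$; - for each subformula $\varphi_1\mathsf R\varphi_2$ (in particular each $\mathsf G\psi=\bot\mathsf R\psi$): if $M\not\models\varphi_1\mathsf R\varphi_2$, the least $i$ with $M,i\not\models\varphi_2$ is in $W$; if $M\models\varphi_1\mathsf R\varphi_2$ and $M\not\models\mathsf G\varphi_2$, the least $i$ with $M,i\models\varphi_1\wedge\varphi_2$ is in $W$. A witness extraction of $M$ for $\varphi$ is an interpretation $M(n_0),M(n_1),\dots$ where $n_0<n_1<\cdots$ is a witness pattern of $M$ for $\varphi$. *)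

From mathcomp Require Import all_boot.
Set Implicit Arguments. Unset Strict Implicit. Unset Printing Implicit Defensive.

Section THT.
Variable P : finType.

Inductive formula : Type :=
| FVar of P
| FBot
| FOr of formula & formula
| FAnd of formula & formula
| FImp of formula & formula
| FNext of formula
| FUntil of formula & formula
| FRelease of formula & formula.

Definition FNeg (f : formula) := FImp f FBot.
Definition FTop := FNeg FBot.
Definition FEv (f : formula) := FUntil FTop f.
Definition FAlw (f : formula) := FRelease FBot f.

Definition word := nat -> {set P}.

(** Satisfaction (H,T), i |= f.  The interpretation (H,T) is assumed to
    satisfy H i \subset T i where relevant. *)
Fixpoint sat (H T : word) (i : nat) (f : formula) : Prop :=
  match f with
  | FVar p => p \in H i
  | FBot => False
  | FOr a b => sat H T i a \/ sat H T i b
  | FAnd a b => sat H T i a /\ sat H T i b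
  | FImp a b => (~ sat H T i a \/ sat H T i b) /\ (~ sat T T i a \/ sat T T i b)
  | FNext a => sat H T i.+1 a
  | FUntil a b => exists j, i <= j /\ sat H T j b /\
                   (forall k, i <= k -> k < j -> sat H T k a)
  | FRelease a b => forall j, i <= j -> sat H T j b \/
                   (exists k, [/\ i <= k, k < j & sat H T k a])
  end.

Definition equilibrium (f : formula) (T : word) : Prop :=
  sat T T 0 f /\
  (forall H : word, (forall i, H i \subset T i) -> H <> T -> ~ sat H T 0 f).

Fixpoint temporal_free (f : formula) : Prop :=
  match f with
  | FVar _ | FBot => True
  | FOr a b | FAnd a b | FImp a b => temporal_free a /\ temporal_free b
  | FNext _ | FUntil _ _ | FRelease _ _ => False
  end.

Fixpoint THT1_XG (f : formula) : Prop :=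
  match f with
  | FVar _ | FBot => True
  | FOr a b | FAnd a b | FImp a b => THT1_XG a /\ THT1_XG b
  | FNext a => temporal_free a
  | FUntil _ _ => False
  | FRelease a b => a = FBot /\ temporal_free b
  end.

Fixpoint subf (g f : formula) : Prop :=
  g = f \/
  match f with
  | FVar _ | FBot => False
  | FOr a b | FAnd a b | FImp a b | FUntil a b | FRelease a b => subf g a \/ subf g b
  | FNext a => subf g a
  end.

Definition witness_conditions (f : formula) (H T : word) (W : nat -> Prop) : Prop :=
  [/\ W 0,
      (exists g, subf (FNext g) f) -> W 1,
      H <> T -> exists i, H i \proper T i /\ W i,
      (forall a b, subf (FUntil a b) f ->
         (sat H T 0 (FUntil a b) ->
            forall i, sat H T i b -> (forall j, j < i -> ~ sat H T j b) -> W i) /\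
         (~ sat H T 0 (FUntil a b) -> sat H T 0 (FEv b) ->
            forall i, ~ sat H T i a -> (forall j, j < i -> sat H T j a) -> W i))
    & (forall a b, subf (FRelease a b) f ->
         (~ sat H T 0 (FRelease a b) ->
            forall i, ~ sat H T i b -> (forall j, j < i -> sat H T j b) -> W i) /\
         (sat H T 0 (FRelease a b) -> ~ sat H T 0 (FAlw b) ->
            forall i, sat H T i (FAnd a b) -> (forall j, j < i -> ~ sat H T j (FAnd a b)) -> W i))].

Definition witness_pattern (f : formula) (H T : word) (n : nat -> nat) : Prop :=
  (forall i, n i < n i.+1) /\
  exists k : nat,
    (forall i, k.+1 <= i -> H (n i) = H (n k.+1) /\ T (n i) = T (n k.+1)) /\
    let W := fun m => exists2 i, i <= k & n i = m in
    witness_conditions f H T W /\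
    (forall W' : nat -> Prop,
        (forall m, W' m -> W m) -> (exists m, W m /\ ~ W' m) ->
        ~ witness_conditions f H T W').

End THT.

From mathcomp Require Import all_boot.
From Stdlib Require Import Classical FunctionalExtensionality.

Set Implicit Arguments.
Unset Strict Implicit.

(* Formulas of THT_1(X,G) only look at the states 0 and 1 and, through G b
   with b temporal-free, at every state.  A witness pattern n keeps 0 and 1,
   and for each subformula G b it keeps the first state (if any) refuting b.
   Hence satisfaction of a subformula by (H,T) and by its extraction along n
   agree, as long as H coincides with T off the pattern.  Lifting a smaller
   model of the extraction to such an H then contradicts the minimality of T. *)

Section TemporalFree.
Variable P : finType.
Implicit Types (g : formula P) (H T : word P).

Lemma sat_temporal_free_local g H T H2 T2 i i2 :
  temporal_free g -> H i = H2 i2 -> T i = T2 i2 ->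
  sat H T i g <-> sat H2 T2 i2 g.
Proof.
elim: g H T H2 T2 i i2
  => [p| |a IHa b IHb|a IHa b IHb|a IHa b IHb|a IHa|a IHa b IHb|a IHa b IHb]
  H T H2 T2 i i2 //=; first by move=> _ ->.
all: move=> [ta tb] EH ET.
all: move: (IHa H T H2 T2 i i2 ta EH ET) (IHb H T H2 T2 i i2 tb EH ET).
all: move: (IHa T T T2 T2 i i2 ta ET ET) (IHb T T T2 T2 i i2 tb ET ET); tauto.
Qed.

Lemma sat_temporal_free_persistent g H T i :
  temporal_free g -> H i \subset T i -> sat H T i g -> sat T T i g.
Proof.
elim: g => [p| |a IHa b IHb|a IHa b IHb|a IHa b IHb|a IHa|a IHa b IHb|a IHa b IHb]
  //= tf HT; first exact: (subsetP HT).
- by case: tf => ta tb [/IHa|/IHb]; auto.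
- by case: tf => ta tb [/IHa ha /IHb hb]; auto.
- by case.
Qed.

Lemma sat_FAlw H T i b : sat H T i (FAlw b) <-> forall j, i <= j -> sat H T j b.
Proof.
split=> hb j ij; last by left; apply: hb.
by case: (hb j ij) => // [[k [_ _ []]]].
Qed.

End TemporalFree.

Lemma homo_ltn_geq_id (f : nat -> nat) : {homo f : i j / i < j} -> forall i, i <= f i.
Proof. by move=> hf; elim=> // i IH; apply: leq_ltn_trans IH (hf _ _ (ltnSn i)). Qed.

Section WitnessExtraction.
Variables (P : finType) (f : formula P) (T : word P) (n : nat -> nat).
Hypothesis wpat : witness_pattern f T T n.

Local Notation Tn := (fun i => T (n i)).
Implicit Type H : word P.

Lemma pattern_homo : {homo n : i j / i < j}.
Proof. by case: wpat => incr _; apply: homo_ltn ltn_trans incr. Qed.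

Lemma pattern_inj : injective n.
Proof. exact/incn_inj/leq_mono/pattern_homo. Qed.

Lemma pattern0 : n 0 = 0.
Proof.
case: wpat => _ [k [_ [[[i _ ni0] _ _ _ _] _]]].
move: (homo_ltn_geq_id pattern_homo i); rewrite ni0 leqn0 => /eqP i0.
by rewrite i0 in ni0.
Qed.

Lemma pattern1 : (exists g, subf (FNext g) f) -> n 1 = 1.
Proof.
case: wpat => _ [k [_ [[_ W1 _ _ _] _]]] /W1 [i _ ni1].
move: (homo_ltn_geq_id pattern_homo i); rewrite ni1.
by case: i ni1 => [|[|//]] //; rewrite pattern0.
Qed.

(* The first state refuting b would belong to the witness set. *)
Lemma pattern_reflects_always b :
  subf (FAlw b) f -> (forall j, sat T T (n j) b) -> forall m, sat T T m b.
Proof.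
case: wpat => _ [k [_ [[_ _ _ _ WR] _]]] sGb hb.
elim/ltn_ind=> m IH; apply: NNPP => nbm.
have notG : ~ sat T T 0 (FAlw b) by move/sat_FAlw/(_ m (leq0n m)).
have [WRa _] := WR _ _ sGb.
by have [i _ nim] := WRa notG m nbm IH; apply: nbm; rewrite -nim.
Qed.

Definition is_lift (H H' : word P) :=
  (forall j, H (n j) = H' j) /\ (forall m, (forall j, n j <> m) -> H m = T m).

Lemma is_lift_refl : is_lift T Tn.
Proof. by []. Qed.

Lemma sat_lift g : THT1_XG g -> (forall h, subf h g -> subf h f) ->
  forall H H', is_lift H H' -> (forall j, H' j \subset T (n j)) ->
  (sat H T 0 g <-> sat H' Tn 0 g).
Proof.
elim: g => [p| |a IHa b IHb|a IHa b IHb|a IHa b IHb|a IHa|a IHa b IHb|a IHa b IHb]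
  // hg hsub H H' HH' HT'; have [EHn EHoff] := HH'.
- by rewrite /= -EHn pattern0.
1-3: case: hg => ga gb.
1-3: have [sub_a sub_b] : (forall h, subf h a -> subf h f) /\
                          (forall h, subf h b -> subf h f)
       by split=> h s; apply: hsub; right; [left|right].
1-3: have TT j : T (n j) \subset T (n j) := subxx _.
1-3: move: (IHa ga sub_a _ _ HH' HT') (IHb gb sub_b _ _ HH' HT').
1-3: move: (IHa ga sub_a _ _ is_lift_refl TT) (IHb gb sub_b _ _ is_lift_refl TT).
1-3: rewrite /=; tauto.
- have n1 : n 1 = 1 by apply: pattern1; exists a; apply: hsub; left.
  by apply: (@sat_temporal_free_local _ a); rewrite -?EHn ?n1.
- simpl in hg; case: hg => ea tb; subst a; rewrite -[FRelease _ b]/(FAlw b) !sat_FAlw.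
  have sGb : subf (FAlw b) f by apply: hsub; left.
  have local j : sat H T (n j) b <-> sat H' Tn j b.
    exact: sat_temporal_free_local (EHn j) _.
  split=> hb j _; first by apply/local/hb.
  have [[i <-]|off] := classic (exists i, n i = j); first by apply/local/hb.
  have hT : forall m, sat T T m b.
    apply: pattern_reflects_always sGb _ => i.
    apply/(@sat_temporal_free_local _ b T T Tn Tn (n i) i tb erefl erefl).
    exact: sat_temporal_free_persistent tb (HT' i) (hb i isT).
  apply/(@sat_temporal_free_local _ b H T T T j j tb _ erefl) => //.
  by apply: EHoff => i ni; apply: off; exists i.
Qed.

(* A preimage of m under n is at most m, since j <= n j. *)
Definition lift_word (H' : word P) : word P := fun m =>
  if [pick j : 'I_m.+1 | n j == m] is Some j then H' j else T m.

Lemma lift_word_is_lift H' : is_lift (lift_word H') H'.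
Proof.
split=> [j|m off]; rewrite /lift_word; case: pickP => [j0 /eqP nj0|] //.
- by move/pattern_inj: nj0 => ->.
- by move/(_ (Ordinal (homo_ltn_geq_id pattern_homo j : j < (n j).+1))); rewrite /= eqxx.
- by case: (off j0).
Qed.

Lemma lift_word_subset H' :
  (forall j, H' j \subset T (n j)) -> forall m, lift_word H' m \subset T m.
Proof.
move=> HT' m; have [EHn EHoff] := lift_word_is_lift H'.
have [[j <-]|off] := classic (exists j, n j = m); first by rewrite EHn.
by rewrite EHoff // => j nj; apply: off; exists j.
Qed.

Lemma lift_word_neq H' : H' <> Tn -> lift_word H' <> T.
Proof.
move=> neq eqT; apply: neq; apply: functional_extensionality => j.
by have [EHn _] := lift_word_is_lift H'; rewrite -EHn eqT.
Qed.

End WitnessExtraction.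

Theorem mainTheorem8 (P : finType) (f : formula P) (T : word P) (n : nat -> nat) :
  THT1_XG f -> equilibrium f T -> witness_pattern f T T n ->
  equilibrium f (fun i => T (n i)).
Proof.
move=> hf [satT minT] wpat.
have sat_f := sat_lift wpat hf (fun h s => s).
split; first by apply/(sat_f T) => //; exact: is_lift_refl.
move=> H' subH' neqH' satH'.
apply: (minT (lift_word T n H')).
- exact: (lift_word_subset wpat subH').
- exact: (lift_word_neq wpat neqH').
- exact/(sat_f _ _ (lift_word_is_lift wpat H') subH').
Qed.
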